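(* (a) If $\Delta\vdash t$ is a closed nominal term-in-context, then its translation $\mathcal{T}(\Delta,t)$ is a closed CRS meta-term. (b) Moreover, if $t$ is ground, then $\mathcal{T}(\Delta,t)$ is a CRS term.
   Context: Nominal terms: $s,t ::= a \mid \pi\cdot X \mid [a]s \mid f\,s \mid (s_1,\ldots,s_n)$ over atoms $a$, variables $X$, function symbols $f$ with arities, and finite-support permutations $\pi$ of atoms. A freshness context $\Delta$ is a set of constraints $a\#X$. Ground terms contain no variables. $\Delta\vdash t$ is closed if: (1) every atom occurrence $a$ in $t$ lies under an abstraction $[a]$; (2) if $\pi\cdot X$ is in the scope of an abstraction of $\pi(a)$ then every occurrence $\pi'\cdot X$ of $X$ in $t$ is in the scope of an abstraction of $\pi'(a)$, or $a\#X\in\Delta$; (3) for two occurrences $\pi_1\cdot X,\pi_2\cdot X$ and $a$ with $\pi_1(a)\neq\pi_2(a)$, if $a$ is not abstracted in one of the occurrences then $a\#X\in\Delta$. CRS meta-terms: $a\mid Z^n(t_1,\dots,t_n)\mid[a]t\mid f\,t\mid(t_1,\dots,t_n)$, where each meta-variable $Z^n$ has a fixed arity $n$ respected by all its meta-applications; a meta-term is closed if every variable occurrence is bound; a CRS term contains no meta-variables. Translation: $\Lambda_t(X)$ is the set of atoms $a$ such that some occurrence of $X$ in $t$ is in the scope of $[a]$. With a fixed total order on atoms, $\mathcal{T}(\Delta,t)$ is obtained from $t$ by replacing each occurrence $\pi\cdot X$ by $X(\pi\cdot xs)$, where $xs$ is the ascending list of $\{\pi^{-1}(a)\mid a\in\Lambda_t(X)\}\setminus\{a\mid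 a\#X\in\Delta\}$ and $\pi\cdot xs$ applies $\pi$ elementwise (no arguments if empty); atoms, abstractions, function applications and tuples are kept unchanged (atoms become CRS variables, nominal variables become meta-variables). *)

From mathcomp Require Import all_boot.
Set Implicit Arguments. Unset Strict Implicit. Unset Printing Implicit Defensive.

(* Atoms, nominal variables (= CRS meta-variables) and function symbols are
   all represented by natural numbers; the fixed total order on atoms is <=. *)
Definition atom := nat.
Definition var := nat.
Definition fsym := nat.

(* Finite-support permutations, as finite lists of swappings;
   perm_act [:: s1; ...; sn] a = s1 (... (sn a)). *)
Definition perm := seq (atom * atom).
Definition swap_act (s : atom * atom) (a : atom) : atom :=
  if a == s.1 then s.2 else if a == s.2 then s.1 else a.
Definition perm_act (p : perm) (a : atom) : atom := foldr swap_act a p.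
Definition perm_inv (p : perm) : perm := rev p.

Inductive term :=
| Atom of atom
| Susp of perm & var
| Abs of atom & term
| App of fsym & term
| Tup of seq term.

(* Freshness contexts: finite sets of constraints a # X *)
Definition fctx := seq (atom * var).

Fixpoint occs (B : seq atom) (t : term) : seq (var * perm * seq atom) :=
  match t with
  | Atom _ => [::]
  | Susp p X => [:: (X, p, B)]
  | Abs a s => occs (a :: B) s
  | App _ s => occs B s
  | Tup ts => flatten (map (occs B) ts)
  end.

Fixpoint aoccs (B : seq atom) (t : term) : seq (atom * seq atom) :=
  match t with
  | Atom a => [:: (a, B)]
  | Susp _ _ => [::]
  | Abs a s => aoccs (a :: B) s
  | App _ s => aoccs B s
  | Tup ts => flatten (map (aoccs B) ts)
  end.

Definition ground (t : term) : Prop := occs [::] t = [::].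

Definition nclosed (D : fctx) (t : term) : Prop :=
  (forall a B, (a, B) \in aoccs [::] t -> a \in B) /\
  (forall X p B a, (X, p, B) \in occs [::] t -> perm_act p a \in B ->
     forall p' B', (X, p', B') \in occs [::] t ->
       perm_act p' a \in B' \/ (a, X) \in D) /\
  (forall X p1 B1 p2 B2 a,
     (X, p1, B1) \in occs [::] t -> (X, p2, B2) \in occs [::] t ->
     perm_act p1 a != perm_act p2 a ->
     (perm_act p1 a \notin B1 \/ perm_act p2 a \notin B2) ->
     (a, X) \in D).

Inductive mterm :=
| MVar of atom
| MMeta of var & seq mterm
| MAbs of atom & mterm
| MFun of fsym & mterm
| MTup of seq mterm.

Fixpoint mocc (t : mterm) : seq (var * nat) :=
  match t with
  | MVar _ => [::]
  | MMeta Z ts => (Z, size ts) :: flatten (map mocc ts)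
  | MAbs _ s => mocc s
  | MFun _ s => mocc s
  | MTup ts => flatten (map mocc ts)
  end.

Fixpoint mvocc (B : seq atom) (t : mterm) : seq (atom * seq atom) :=
  match t with
  | MVar a => [:: (a, B)]
  | MMeta _ ts => flatten (map (mvocc B) ts)
  | MAbs a s => mvocc (a :: B) s
  | MFun _ s => mvocc B s
  | MTup ts => flatten (map (mvocc B) ts)
  end.

Definition is_metaterm (t : mterm) : Prop :=
  forall Z n m, (Z, n) \in mocc t -> (Z, m) \in mocc t -> n = m.

Definition mclosed (t : mterm) : Prop :=
  forall a B, (a, B) \in mvocc [::] t -> a \in B.

Definition is_crs_term (t : mterm) : Prop := mocc t = [::].

Definition Lambda (t : term) (X : var) : seq atom :=
  flatten [seq o.2 | o <- occs [::] t & o.1.1 == X].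

Definition trans_args (D : fctx) (L : seq atom) (p : perm) (X : var) : seq atom :=
  sort leq (undup [seq c <- map (perm_act (perm_inv p)) L | (c, X) \notin D]).

Fixpoint trans (D : fctx) (Lam : var -> seq atom) (t : term) : mterm :=
  match t with
  | Atom a => MVar a
  | Susp p X => MMeta X (map (fun c => MVar (perm_act p c)) (trans_args D (Lam X) p X))
  | Abs a s => MAbs a (trans D Lam s)
  | App f s => MFun f (trans D Lam s)
  | Tup ts => MTup (map (trans D Lam) ts)
  end.

Definition translate (D : fctx) (t : term) : mterm := trans D (Lambda t) t.

From mathcomp Require Import all_boot.

(* Condition (2) of closedness transports "c is abstracted at one occurrence
   of X" to every other occurrence, and condition (3) shows that an atom of
   Lambda_t(X) reached through pi . X is abstracted at that very occurrence.
   Hence, for every occurrence pi . X, the argument list xs consists exactly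
   of the atoms c not fresh for X with pi(c) abstracted above the occurrence:
   all occurrences of X get the same number of arguments, and every argument
   pi(c) is bound.  The remaining variables of the translation are the atoms
   of t, bound by condition (1). *)

Fixpoint term_nested_ind (P : term -> Prop)
  (HA : forall a, P (Atom a))
  (HS : forall p X, P (Susp p X))
  (HB : forall a s, P s -> P (Abs a s))
  (HF : forall f s, P s -> P (App f s))
  (HT : forall ts, foldr (fun t Q => P t /\ Q) True ts -> P (Tup ts))
  (t : term) : P t :=
  match t with
  | Atom a => HA a
  | Susp p X => HS p X
  | Abs a s => HB a s (@term_nested_ind P HA HS HB HF HT s)
  | App f s => HF f s (@term_nested_ind P HA HS HB HF HT s)
  | Tup ts => HT ts ((fix F (l : seq term) : foldr (fun t Q => P t /\ Q) True l :=
       match l with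
       | [::] => I
       | x :: l' => conj (@term_nested_ind P HA HS HB HF HT x) (F l')
       end) ts)
  end.

Lemma swap_actK s : involutive (swap_act s).
Proof.
case: s => x y a; rewrite /swap_act /=.
case: (eqVneq a x) => [->|hx]; first by rewrite eqxx; case: eqVneq.
case: (eqVneq a y) => [->|hy]; first by rewrite eqxx.
by rewrite (negbTE hx) (negbTE hy).
Qed.

Lemma perm_act_inv p a : perm_act (perm_inv p) a = foldl (fun x s => swap_act s x) a p.
Proof. by rewrite /perm_act /perm_inv -[in RHS](revK p) foldl_rev. Qed.

Lemma perm_actK p : cancel (perm_act (perm_inv p)) (perm_act p).
Proof. by move=> a; rewrite perm_act_inv; elim: p a => //= s p IH a; rewrite IH swap_actK. Qed.

Lemma perm_invK p : cancel (perm_act p) (perm_act (perm_inv p)).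
Proof. by move=> a; rewrite perm_act_inv; elim: p a => //= s p IH a; rewrite swap_actK IH. Qed.

Lemma mem_trans_args D Lx p X c :
  (c \in trans_args D Lx p X) = ((c, X) \notin D) && (perm_act p c \in Lx).
Proof.
rewrite /trans_args mem_sort mem_undup mem_filter; case: ((c, X) \in D) => //=.
apply/mapP/idP => [[a ha ->]|h]; first by rewrite perm_actK.
by exists (perm_act p c); rewrite ?perm_invK.
Qed.

Lemma mem_Lambda t X a :
  reflect (exists p B, (X, p, B) \in occs [::] t /\ a \in B) (a \in Lambda t X).
Proof.
apply: (iffP flatten_mapP) => [[[[Y p] B]]|[p [B [h ha]]]].
  by rewrite mem_filter /= => /andP [/eqP -> h] ha; exists p, B.
by exists (X, p, B); rewrite // mem_filter eqxx.
Qed.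

Section Translation.

Variables (D : fctx) (L : var -> seq atom).

Lemma mocc_trans t B0 Z n : (Z, n) \in mocc (trans D L t) ->
  exists p B, (Z, p, B) \in occs B0 t /\ n = size (trans_args D (L Z) p Z).
Proof.
elim/term_nested_ind: t B0 => [a|p X|a s IH|f s IH|ts IH] B0 //=.
- rewrite in_cons => /orP [/eqP [-> ->]|].
    by exists p, B0; rewrite mem_seq1 eqxx size_map.
  by elim: (trans_args _ _ _ _).
- exact: IH.
- exact: IH.
- elim: ts IH => //= x ts IHl [Hx Hts]; rewrite mem_cat => /orP [h|h].
    by have [p [B [h1 ->]]] := Hx B0 h; exists p, B; rewrite mem_cat h1.
  by have [p [B [h1 ->]]] := IHl Hts h; exists p, B; rewrite mem_cat h1 orbT.
Qed.

Lemma mvocc_trans t B0 a B : (a, B) \in mvocc B0 (trans D L t) ->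
  (a, B) \in aoccs B0 t \/ exists X p c, (X, p, B) \in occs B0 t /\
    c \in trans_args D (L X) p X /\ a = perm_act p c.
Proof.
elim/term_nested_ind: t B0 => [a'|p X|a' s IH|f s IH|ts IH] B0 //=.
- by left.
- move=> h; right; exists X, p.
  elim: (trans_args _ _ _ _) h => //= c s IHs.
  rewrite in_cons => /orP [/eqP [-> ->]|/IHs [c' [hB [hc' ->]]]].
    by exists c; rewrite mem_seq1 eqxx mem_head.
  by exists c'; rewrite hB in_cons hc' orbT.
- exact: IH.
- exact: IH.
- elim: ts IH => //= x ts IHl [Hx Hts]; rewrite mem_cat => /orP [h|h].
    case: (Hx B0 h) => [h1|[X [p [c [h1 h2]]]]]; first by left; rewrite mem_cat h1.
    by right; exists X, p, c; rewrite mem_cat h1.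
  case: (IHl Hts h) => [h1|[X [p [c [h1 h2]]]]]; first by left; rewrite mem_cat h1 orbT.
  by right; exists X, p, c; rewrite mem_cat h1 orbT.
Qed.

End Translation.

Section ClosedTerm.

Variables (D : fctx) (t : term).
Hypothesis closed_t : nclosed D t.

Lemma nclosed_atoms a B : (a, B) \in aoccs [::] t -> a \in B.
Proof. by case: closed_t => H1 _; apply: H1. Qed.

Lemma nclosed_abstracted_transfer {X p B q B' c} :
  (X, p, B) \in occs [::] t -> (X, q, B') \in occs [::] t -> (c, X) \notin D ->
  perm_act p c \in B -> perm_act q c \in B'.
Proof.
case: closed_t => _ [H2 _] hp hq hD hB.
by case: (H2 X p B c hp hB q B' hq) => // hcD; rewrite hcD in hD.
Qed.

Lemma nclosed_Lambda_abstracted X p B c :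
  (X, p, B) \in occs [::] t -> (c, X) \notin D ->
  perm_act p c \in Lambda t X -> perm_act p c \in B.
Proof.
case: closed_t => _ [_ H3] hp hD /mem_Lambda [p0 [B0 [hp0 hB0]]].
case: (eqVneq (perm_act p c) (perm_act p0 c)) => [e|ne].
  by apply: (nclosed_abstracted_transfer hp0 hp hD); rewrite -e.
apply/negPn/negP => hB.
by have := H3 X p B p0 B0 c hp hp0 ne (or_introl hB); rewrite (negbTE hD).
Qed.

Lemma nclosed_mem_trans_args {X p B} c : (X, p, B) \in occs [::] t ->
  (c \in trans_args D (Lambda t X) p X) = ((c, X) \notin D) && (perm_act p c \in B).
Proof.
move=> hp; rewrite mem_trans_args; case hD: ((c, X) \notin D) => //=.
apply/idP/idP => [|hB]; first exact: nclosed_Lambda_abstracted.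
by apply/mem_Lambda; exists p, B.
Qed.

Lemma nclosed_size_trans_args X p B q B' :
  (X, p, B) \in occs [::] t -> (X, q, B') \in occs [::] t ->
  size (trans_args D (Lambda t X) p X) = size (trans_args D (Lambda t X) q X).
Proof.
move=> hp hq; apply/perm_size/uniq_perm; rewrite ?sort_uniq ?undup_uniq // => c.
rewrite (nclosed_mem_trans_args _ hp) (nclosed_mem_trans_args _ hq).
apply/andP/andP => -[hD hB]; split=> //.
  exact: nclosed_abstracted_transfer hp hq hD hB.
exact: nclosed_abstracted_transfer hq hp hD hB.
Qed.

Lemma translate_is_metaterm : is_metaterm (translate D t).
Proof.
move=> Z n m /mocc_trans -/(_ [::]) [p [B [hp ->]]].
move=> /mocc_trans -/(_ [::]) [q [B' [hq ->]]].
exact: nclosed_size_trans_args hp hq.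
Qed.

Lemma translate_mclosed : mclosed (translate D t).
Proof.
move=> a B /mvocc_trans [/nclosed_atoms //|[X [p [c [hp [hc ->]]]]]].
by move: hc; rewrite (nclosed_mem_trans_args _ hp) => /andP [].
Qed.

End ClosedTerm.

Lemma translate_ground_crs_term D t : ground t -> is_crs_term (translate D t).
Proof.
rewrite /ground /is_crs_term => hg.
case e: (mocc _) => [//|[Z n] s].
have /mocc_trans -/(_ [::]) [p [B [h _]]] : (Z, n) \in mocc (translate D t).
  by rewrite e mem_head.
by rewrite hg in h.
Qed.

Theorem mainTheorem5 (D : fctx) (t : term) :
  nclosed D t ->
  (is_metaterm (translate D t) /\ mclosed (translate D t)) /\
  (ground t -> is_crs_term (translate D t)).
Proof.
move=> closed_t; split; last exact: translate_ground_crs_term.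
by split; [apply: translate_is_metaterm | apply: translate_mclosed].
Qed.
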